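(* Let $a$ and $b$ be coprime integers and let $\ell\in G_{(a,b)}$ with $\ell\notin\{1,2\}$. Then all elements of $\mathcal{K}_{(a,b)}(\ell)$ have the same parity.
   Context: For integers $x,y$, $G_{(x,y)}$ is the set of positive integers $n$ such that $n\mid(x^k+y^k)$ for some positive integer $k$; for such $n$, $\mathcal{K}_{(x,y)}(n)=\{k\text{ positive integer}: n\mid(x^k+y^k)\}$. *)

From Stdlib Require Import ZArith.
Open Scope Z_scope.

Definition inK (x y n k : Z) : Prop := 0 < k /\ (n | x ^ k + y ^ k).

Definition inG (x y n : Z) : Prop := 0 < n /\ exists k, inK x y n k.

(* Since gcd(a,b) = 1, every l dividing some a^k + b^k is coprime to b.  For k1, k2 in
   K(l) we have a^k1 = -b^k1 and a^k2 = -b^k2 mod l; raising the first congruence to the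
   power k2 and the second to the power k1 gives (-1)^k2 b^(k1 k2) = a^(k1 k2) =
   (-1)^k1 b^(k1 k2) mod l, so l divides (-1)^k2 - (-1)^k1.  If k1 and k2 had different
   parities, l would divide 2. *)

From Stdlib Require Import ZArith Znumtheory Lia.
Open Scope Z_scope.

Lemma rel_prime_pow (a b k : Z) : 0 <= k -> rel_prime a b -> rel_prime a (b ^ k).
Proof.
  intros Hk Hab; pattern k; apply natlike_ind; [| | exact Hk].
  - apply rel_prime_sym, rel_prime_1.
  - intros m Hm IH; rewrite Z.pow_succ_r by exact Hm.
    now apply rel_prime_mult.
Qed.

Lemma divide_pow_sub (n x y k : Z) : 0 <= k -> (n | x - y) -> (n | x ^ k - y ^ k).
Proof.
  intros Hk Hxy; pattern k; apply natlike_ind; [| | exact Hk].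
  - rewrite Z.sub_diag; apply Z.divide_0_r.
  - intros m Hm IH; rewrite !Z.pow_succ_r by exact Hm.
    replace (x * x ^ m - y * y ^ m) with (x * (x ^ m - y ^ m) + (x - y) * y ^ m) by ring.
    apply Z.divide_add_r; [apply Z.divide_mul_r | apply Z.divide_mul_l]; assumption.
Qed.

Lemma rel_prime_of_divide_pow_add (a b l k : Z) :
  rel_prime a b -> 0 < k -> (l | a ^ k + b ^ k) -> rel_prime l b.
Proof.
  intros Hab Hk Hl.
  constructor; [apply Z.divide_1_l .. |]; intros d Hdl Hdb.
  assert (Hdbk : (d | b ^ k)).
  { replace k with (Z.succ (k - 1)) by lia; rewrite Z.pow_succ_r by lia.
    now apply Z.divide_mul_l. }
  assert (Hdak : (d | a ^ k)).
  { replace (a ^ k) with (a ^ k + b ^ k - b ^ k) by ring.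
    apply Z.divide_sub_r; [apply (Z.divide_trans _ l) |]; assumption. }
  assert (Hda : rel_prime d (a ^ k)).
  { apply rel_prime_pow; [lia |].
    apply rel_prime_sym in Hab; exact (rel_prime_div _ _ _ Hab Hdb). }
  destruct Hda as [_ _ Hgcd]; apply Hgcd; [apply Z.divide_refl | exact Hdak].
Qed.

Lemma divide_m1_pow_sub (a b l k1 k2 : Z) :
  rel_prime l b -> 0 <= k1 -> 0 <= k2 ->
  (l | a ^ k1 + b ^ k1) -> (l | a ^ k2 + b ^ k2) ->
  (l | (-1) ^ k2 - (-1) ^ k1).
Proof.
  intros Hlb Hk1 Hk2 D1 D2.
  assert (E1 : (l | (a ^ k1) ^ k2 - (- b ^ k1) ^ k2)).
  { apply divide_pow_sub; [exact Hk2 |]; now rewrite Z.sub_opp_r. }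
  assert (E2 : (l | (a ^ k2) ^ k1 - (- b ^ k2) ^ k1)).
  { apply divide_pow_sub; [exact Hk1 |]; now rewrite Z.sub_opp_r. }
  assert (E : (l | b ^ (k1 * k2) * ((-1) ^ k2 - (-1) ^ k1))).
  { replace (b ^ (k1 * k2) * ((-1) ^ k2 - (-1) ^ k1))
      with (((a ^ k2) ^ k1 - (- b ^ k2) ^ k1) - ((a ^ k1) ^ k2 - (- b ^ k1) ^ k2)).
    - now apply Z.divide_sub_r.
    - replace (- b ^ k1) with ((-1) * b ^ k1) by ring.
      replace (- b ^ k2) with ((-1) * b ^ k2) by ring.
      rewrite !Z.pow_mul_l, <- !Z.pow_mul_r by lia.
      rewrite (Z.mul_comm k2 k1); ring. }
  apply (Gauss l (b ^ (k1 * k2))); [exact E |].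
  apply rel_prime_pow; [apply Z.mul_nonneg_nonneg | ]; assumption.
Qed.

Lemma pow_m1_even (k : Z) : 0 <= k -> (-1) ^ k = if Z.even k then 1 else -1.
Proof.
  intros Hk; change (-1) with (- (1)); destruct (Z.even k) eqn:Hev.
  - rewrite Z.pow_opp_even by now apply Z.even_spec.
    apply Z.pow_1_l, Hk.
  - rewrite Z.pow_opp_odd by (apply Z.odd_spec; now rewrite <- Z.negb_even, Hev).
    now rewrite Z.pow_1_l.
Qed.

Theorem lemma2p12 (a b l : Z) :
  Z.gcd a b = 1 -> inG a b l -> l <> 1 -> l <> 2 ->
  forall k1 k2, inK a b l k1 -> inK a b l k2 -> Z.even k1 = Z.even k2.
Proof.
  intros Hab [Hl _] Hl1 Hl2 k1 k2 [Hk1 D1] [Hk2 D2].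
  apply Zgcd_1_rel_prime in Hab.
  pose proof (rel_prime_of_divide_pow_add _ _ _ _ Hab Hk1 D1) as Hlb.
  pose proof (divide_m1_pow_sub _ _ _ _ _ Hlb (Z.lt_le_incl _ _ Hk1)
                (Z.lt_le_incl _ _ Hk2) D1 D2) as H.
  rewrite !pow_m1_even in H by lia.
  assert (Hnot_divide_2 : forall m, (l | m) -> Z.abs m = 2 -> False).
  { intros m Hlm Hm; apply Z.divide_abs_r in Hlm; rewrite Hm in Hlm.
    apply Z.divide_pos_le in Hlm; lia. }
  destruct (Z.even k1), (Z.even k2); try reflexivity;
    exfalso; exact (Hnot_divide_2 _ H eq_refl).
Qed.
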